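(* In Algorithm 1 (described in the context), every time a triplet $(\mathrm{dist},\mathrm{seed},v_0)$ is popped from $Q$ the following hold: (1) if $\mathrm{seed}\in\mathrm{NLV}(v_0,k)$ then $\mathrm{dist}=d_G(\mathrm{seed},v_0)$; (2) every pair $(s,v)\in\mathcal L\times V$ with $d_G(s,v)<\mathrm{dist}$ and $s\in\mathrm{NLV}(v,k)$ belongs to the visited set.
   Context: $d_G$ is the shortest-path distance in $G$; $\mathrm{NLV}(v,k)$ is the set of $k$ nearest labeled vertices to $v$ with respect to $d_G$. Algorithm 1: input an undirected graph $G=(V,E,w)$ with non-negative weights, a set $\mathcal L\subseteq V$ of labeled vertices, and an integer $k\ge1$. It maintains a min-priority queue $Q$ of pairs $(\mathrm{seed},v)\in\mathcal L\times V$ with priorities (a popped pair with priority $\mathrm{dist}$ is the triplet $(\mathrm{dist},\mathrm{seed},v)$), and for each $v\in V$ a list kNN$[v]$ (initially empty) and a set $S_v$ (initially empty); the visited set is $\{(s,v): s\in S_v\}$. Initially, for each $s\in\mathcal L$, $(s,s)$ is inserted with priority $0$. While $Q$ is nonempty: pop the pair $(\mathrm{seed},v_0)$ of minimum priority $\mathrm{dist}$; add $\mathrm{seed}$ to $S_{v_0}$; if kNN$[v_0]$ has fewer than $k$ entries, append $(\mathrm{dist},\mathrm{seed})$ to kNN$[v_0]$ and, for every neighbour $v$ of $v_0$ such that kNN$[v]$ has fewer than $k$ entries and $\mathrm{seed}\notin S_v$, perform decrease-or-insert of $(\mathrm{seed},v)$ with priority $\mathrm{dist}+w(v_0,v)$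 (if the pair is in $Q$ its priority is lowered to this value when smaller; otherwise it is inserted). *)

From HB Require Import structures.
From mathcomp Require Import all_boot all_order all_algebra.
From mathcomp Require Import classical_sets reals constructive_ereal ereal.
Set Implicit Arguments. Unset Strict Implicit. Unset Printing Implicit Defensive.
Import Order.TTheory GRing.Theory Num.Theory.
Local Open Scope ring_scope.
Local Open Scope classical_set_scope.

Section KNN.
Variables (R : realType) (V : finType).
(* undirected graph: symmetric irreflexive adjacency [e], weight [w u v] of edge {u,v} *)
Variables (e : rel V) (w : V -> V -> R).

Fixpoint pweight (x : V) (p : seq V) : R :=
  if p is y :: p' then w x y + pweight y p' else 0.

Definition walk (s : V) (p : seq V) (v : V) : bool := path e s p && (last s p == v).

(* shortest-path distance d_G(s,v) (infimum over walks; +oo if no walk) *)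
Definition dG (s v : V) : \bar R :=
  ereal_inf [set (pweight s p)%:E | p in [set p | walk s p v]].

(* tie-breaking convention between labeled vertices at equal distance *)
Definition rk (s : V) : nat := enum_rank s.

Definition closer (v s' s : V) : bool :=
  ((dG s' v < dG s v)%E) || ((dG s' v == dG s v) && (rk s' < rk s)%N).

Definition NLV (L : {set V}) (k : nat) (v : V) : {set V} :=
  [set s in L | #|[set s' in L | closer v s' s]| < k]%N.

Record state := State {
  Q : V -> V -> option R;          (* Q seed v = Some priority iff (seed,v) is in the queue *)
  kNN : V -> seq (R * V);          (* kNN[v], list of (dist, seed) *)
  S : V -> {set V}                 (* S_v ; visited set = {(s,v) | s \in S_v} *)
}.

Definition init (L : {set V}) : state :=
  State (fun s v => if (s \in L) && (v == s) then Some 0 else None)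
        (fun _ => [::]) (fun _ => finset.set0).

Definition is_pop (st : state) (dist : R) (seed v0 : V) : Prop :=
  Q st seed v0 = Some dist /\
  forall s v d', Q st s v = Some d' ->
    dist < d' \/ (dist = d' /\ (rk seed <= rk s)%N).

Definition decr_or_ins (o : option R) (p : R) : option R :=
  if o is Some q then Some (Num.min q p) else Some p.

Definition after (k : nat) (st : state) (dist : R) (seed v0 : V) : state :=
  let Q1 := fun s v => if (s == seed) && (v == v0) then None else Q st s v in
  let S1 := fun v => if v == v0 then seed |: S st v else S st v in
  if (size (kNN st v0) < k)%N then
    let kNN1 := fun v => if v == v0 then rcons (kNN st v) (dist, seed) else kNN st v in
    let Q2 := fun s v =>
      if [&& s == seed, e v0 v, (size (kNN1 v) < k)%N & seed \notin S1 v]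
      then decr_or_ins (Q1 s v) (dist + w v0 v) else Q1 s v in
    State Q2 kNN1 S1
  else State Q1 (kNN st) S1.

Inductive reach (L : {set V}) (k : nat) : state -> Prop :=
| reach_init : reach L k (init L)
| reach_step st dist seed v0 :
    reach L k st -> is_pop st dist seed v0 -> reach L k (after k st dist seed v0).

End KNN.

From HB Require Import structures.
From mathcomp Require Import all_boot all_order all_algebra.
From mathcomp Require Import classical_sets reals constructive_ereal ereal.
Import Order.TTheory GRing.Theory Num.Theory.
Local Open Scope ring_scope.
Set Implicit Arguments. Unset Strict Implicit. Unset Printing Implicit Defensive.

(* The run of Algorithm 1 preserves an invariant in the style of Dijkstra's
   algorithm (record [invariant]).  Its key consequence is a frontier property:
   if s is among the k nearest labeled vertices of v but (s, v) is not yet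
   visited, some queue entry of seed s has priority at most d_G(s, v).  This is
   proved along a shortest s-v walk, using that s stays among the k nearest
   labeled vertices of every vertex of that walk, and that kNN[u] is never full
   while such a pair (s, u) is unvisited, because every seed already in kNN[u]
   is closer to u than s.  Since popped entries are minimal in the queue, no
   such unvisited pair lies strictly below the popped priority, which is (2);
   applied to the popped pair itself it gives d_G(seed, v0) >= dist, hence (1). *)

Lemma has_argmin (R : realDomainType) (T : choiceType) (P : pred T) (f : T -> R)
    (l : seq T) :
  has P l -> exists2 x, (x \in l) && P x & forall y, y \in l -> P y -> f x <= f y.
Proof.
case/hasP => x0 x0l Px0.
have [i Pi imin] := arg_minP (P := P \o @ssval _ l) (f \o @ssval _ l)
  (i0 := SeqSub x0l) Px0.
exists (ssval i); first by rewrite ssvalP.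
by move=> y yl Py; apply: (imin (SeqSub yl)).
Qed.

Section Walks.
Variables (R : realType) (V : finType) (e : rel V) (w : V -> V -> R).
Hypothesis w_ge0 : forall u v, e u v -> 0 <= w u v.

Local Notation d := (dG e w).

Lemma pweight_cat x p q :
  pweight w x (p ++ q) = pweight w x p + pweight w (last x p) q.
Proof. by elim: p x => [|y p IH] x /=; rewrite ?add0r // IH addrA. Qed.

Lemma pweight_rcons x p y : pweight w x (rcons p y) = pweight w x p + w (last x p) y.
Proof. by rewrite -cats1 pweight_cat /= addr0. Qed.

Lemma pweight_ge0 x p : path e x p -> 0 <= pweight w x p.
Proof.
elim: p x => [|y p IH] x //= /andP[exy hp].
by rewrite addr_ge0 ?w_ge0 ?IH.
Qed.

Lemma path_cut_at_start x r : path e x r -> uniq r -> exists q,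
  [/\ path e x q, last x q = last x r, uniq (x :: q) & pweight w x q <= pweight w x r].
Proof.
have [xr|xNr hr ur] := boolP (x \in r); last by exists r; rewrite /= xNr.
case/splitPr: xr => r1 r2; rewrite cat_path last_cat cat_uniq /= => /and3P[h1 ex h2].
case/and3P=> _ _ ur2; exists r2; split => //.
by rewrite pweight_cat /= ler_wpDl ?pweight_ge0 // ler_wpDl ?w_ge0.
Qed.

Lemma shortcut_path x p : path e x p -> exists q,
  [/\ path e x q, last x q = last x p, uniq (x :: q) & pweight w x q <= pweight w x p].
Proof.
elim: p x => [|y p IH] x /=; first by exists [::].
case/andP=> exy /IH[q [hq lq uq wq]].
have [|r [hr lr ur wr]] := @path_cut_at_start x (y :: q) _ uq; first by rewrite /= exy.
by exists r; rewrite lr /= lq (le_trans wr) ?lerD2l.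
Qed.

Fixpoint seqs_upto n : seq (seq V) :=
  if n is n'.+1 then [::] :: [seq x :: q | x <- enum V, q <- seqs_upto n'] else [:: [::]].

Lemma mem_seqs_upto n q : (size q <= n)%N -> q \in seqs_upto n.
Proof.
elim: n q => [|n IH] [|x q] //= hq; rewrite in_cons /=.
by apply/allpairsP; exists (x, q); rewrite mem_enum IH.
Qed.

Lemma dG_le_walk s p v : walk e s p v -> (d s v <= (pweight w s p)%:E)%E.
Proof. by move=> hp; apply: ereal_inf_lbound; exists p. Qed.

Lemma dG_ge0 s v : (0 <= d s v)%E.
Proof.
apply: le_ereal_inf_tmp => _ [p /andP[hp _] <-].
by rewrite lee_fin pweight_ge0.
Qed.

Lemma walk_shortcut s p v : walk e s p v ->
  exists2 q, (q \in seqs_upto #|V|) && walk e s q v & pweight w s q <= pweight w s p.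
Proof.
case/andP=> hp /eqP lp; have [q [hq lq uq wq]] := shortcut_path hp.
exists q => //; rewrite /walk hq lq lp eqxx andbT mem_seqs_upto //.
apply/ltnW; rewrite -[(size q).+1]/(size (s :: q)) -(card_uniqP uq).
exact: max_card.
Qed.

Lemma dG_attained s v : (d s v < +oo)%E ->
  exists2 p, walk e s p v & (pweight w s p)%:E = d s v.
Proof.
case/ereal_inf_lt=> _ [p0 /walk_shortcut[q0 /andP[q0C q0w] _] <-] _.
have [|p /andP[_ hp] pmin] := has_argmin (pweight w s) (P := walk e s ^~ v)
  (l := seqs_upto #|V|); first by apply/hasP; exists q0.
exists p => //; apply/eqP; rewrite eq_le dG_le_walk // andbT.
apply: le_ereal_inf_tmp => _ [q /walk_shortcut[q' /andP[q'C hq'] wq'] <-].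
by rewrite lee_fin (le_trans (pmin _ q'C hq') wq').
Qed.

Lemma dG_edge_le s u v : e u v -> (d s v <= d s u + (w u v)%:E)%E.
Proof.
move=> euv; have [/dG_attained[p /andP[hp /eqP lp] <-]|] := boolP (d s u < +oo)%E.
  rewrite -EFinD -lp -pweight_rcons dG_le_walk //.
  by rewrite /walk rcons_path hp lp euv last_rcons eqxx.
by rewrite ltey negbK => /eqP ->; rewrite addye ?leey.
Qed.

End Walks.

Section Nearest.
Variables (R : realType) (V : finType) (e : rel V) (w : V -> V -> R).
Hypothesis w_ge0 : forall u v, e u v -> 0 <= w u v.
Local Notation d := (dG e w).

Lemma closer_shortest_edge s s' u v r : e u v ->
  d s u = r%:E -> d s v = (r + w u v)%:E -> closer e w u s' s -> closer e w v s' s.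
Proof.
move=> euv; rewrite /closer => -> -> /orP[lt|/andP[/eqP eq lt_rk]].
  by apply/orP; left; rewrite (le_lt_trans (dG_edge_le w_ge0 s' euv)) // EFinD lteD2rE.
have := dG_edge_le w_ge0 s' euv; rewrite eq -EFinD le_eqVlt.
by case/orP=> ->; rewrite ?lt_rk ?orbT.
Qed.

Lemma NLV_shortest_edge (L : {set V}) k s u v r : e u v ->
  d s u = r%:E -> d s v = (r + w u v)%:E -> s \in NLV e w L k v -> s \in NLV e w L k u.
Proof.
move=> euv du dv; rewrite !inE => /andP[-> /(leq_ltn_trans _)]; apply.
apply/subset_leq_card/fintype.subsetP => s'; rewrite !inE => /andP[-> /=].
exact: closer_shortest_edge du dv.
Qed.

End Nearest.

Section Algorithm.
Variables (R : realType) (V : finType) (e : rel V) (w : V -> V -> R).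
Hypothesis e_irr : irreflexive e.
Hypothesis w_ge0 : forall u v, e u v -> 0 <= w u v.
Variables (L : {set V}) (k : nat).

Local Notation d := (dG e w).
Local Notation NL := (NLV e w L k).
Local Notation state := (state R V).

Definition lexle (x1 : R) (r1 : nat) (x2 : R) (r2 : nat) : bool :=
  (x1 < x2) || ((x1 == x2) && (r1 <= r2)%N).

Lemma lexle_trans x1 r1 x2 r2 x3 r3 :
  lexle x1 r1 x2 r2 -> lexle x2 r2 x3 r3 -> lexle x1 r1 x3 r3.
Proof.
rewrite /lexle => /orP[lt12|/andP[/eqP-> le12]] /orP[lt23|/andP[/eqP<- le23]].
- by rewrite (lt_trans lt12 lt23).
- by rewrite lt12.
- by rewrite lt23.
- by rewrite eqxx (leq_trans le12 le23) orbT.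
Qed.

Lemma lexle_le x1 r1 x2 r2 : lexle x1 r1 x2 r2 -> x1 <= x2.
Proof. by case/orP=> [/ltW|/andP[/eqP-> _]]. Qed.

Lemma lexle_addr x r a : 0 <= a -> lexle x r (x + a) r.
Proof.
rewrite /lexle le_eqVlt => /orP[/eqP <-|a_gt0]; first by rewrite addr0 eqxx leqnn orbT.
by rewrite ltrDl a_gt0.
Qed.

Lemma is_pop_lexle (st : state) dist seed v0 s v x : is_pop st dist seed v0 ->
  Q st s v = Some x -> lexle dist (rk seed) x (rk s).
Proof.
case=> _ min /min[lt|[<- le_rk]]; first by rewrite /lexle lt.
by rewrite /lexle eqxx le_rk orbT.
Qed.

Lemma rk_inj : injective (@rk V).
Proof. by move=> x y /val_inj /enum_rank_inj. Qed.

Record invariant (st : state) : Prop := Invariant {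
  queue_sound : forall s v x, Q st s v = Some x ->
    [/\ s \in L, s \notin S st v & (d s v <= x%:E)%E];
  source_pending : forall s, s \in L ->
    s \in S st s \/ exists2 x, Q st s s = Some x & x <= 0;
  edge_relaxed : forall s u v, s \in S st u -> s \in NL u -> e u v -> s \in NL v ->
    s \in S st v \/ exists2 x, Q st s v = Some x & (x%:E <= d s u + (w u v)%:E)%E;
  kNN_uniq : forall v, uniq (map snd (kNN st v));
  kNN_sound : forall v x s, (x, s) \in kNN st v ->
    [/\ s \in L, s \in S st v & (d s v <= x%:E)%E];
  kNN_before_queue : forall v x (s : V), (x, s) \in kNN st v ->
    forall s' v' x', Q st s' v' = Some x' -> lexle x (rk s) x' (rk s')
}.

Lemma invariant_init : invariant (init R L).
Proof.
split=> //= [s v x|s sL|s u v]; last by rewrite inE.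
  case: ifP => // /andP[sL /eqP->] [<-]; rewrite inE sL.
  by split=> //; apply: (@dG_le_walk _ _ _ _ _ [::]); rewrite /walk /= eqxx.
by right; exists 0; rewrite ?sL ?eqxx.
Qed.

Section Reached.
Variable st : state.
Hypothesis st_inv : invariant st.

Lemma visited_or_queued s p v : walk e s p v -> (pweight w s p)%:E = d s v ->
  s \in NL v -> s \in S st v \/ exists v', exists2 x, Q st s v' = Some x & (x%:E <= d s v)%E.
Proof.
elim/last_ind: p v => [|p u IH] v.
  rewrite /walk /= => /eqP <- _ sN; have sL : s \in L by move: sN; rewrite inE => /andP[].
  case: (source_pending st_inv sL) => [->|[x sx x_le0]]; [by left|right].
  by exists s, x; rewrite // (le_trans _ (dG_ge0 w_ge0 _ _)) ?lee_fin.
rewrite /walk rcons_path last_rcons => /andP[/andP[hp eu] /eqP <-{v}].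
rewrite pweight_rcons => wv sN; set u' := last s p in eu wv sN *.
have du : d s u' = (pweight w s p)%:E.
  apply/eqP; rewrite eq_le dG_le_walk ?andbT; last by rewrite /walk hp eqxx.
  by rewrite -(leeD2rE _ _ (fin_numE (w u' u)%:E)) -EFinD wv dG_edge_le.
have sNu : s \in NL u' by apply: NLV_shortest_edge du (esym wv) sN.
have [|sSu|[y [x sx x_le]]] := IH u' _ (esym du) sNu; first by rewrite /walk hp eqxx.
  case: (edge_relaxed st_inv sSu sNu eu sN) => [->|[x sx x_le]]; [by left|right].
  by exists u, x; rewrite // -wv EFinD -du.
right; exists y, x => //; apply: le_trans x_le _.
by rewrite du -wv lee_fin lerDl w_ge0.
Qed.

Lemma unvisited_queued s v : s \in NL v -> s \notin S st v -> (d s v < +oo)%E ->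
  exists v', exists2 x, Q st s v' = Some x & (x%:E <= d s v)%E.
Proof.
move=> sN sNS /(dG_attained w_ge0)[p hp hw].
by case: (visited_or_queued hp hw sN) => // sS; rewrite sS in sNS.
Qed.

Lemma kNN_seed_closer s v x' s' : s \in NL v -> s \notin S st v ->
  (x', s') \in kNN st v -> closer e w v s' s.
Proof.
move=> sN sNS s'kNN; have [_ s'S ds'] := kNN_sound st_inv s'kNN.
rewrite /closer; have [|] := boolP (d s v < +oo)%E; last first.
  by rewrite ltey negbK => /eqP ->; rewrite (le_lt_trans ds') ?ltey.
case/(unvisited_queued sN sNS)=> y [x sx x_le].
case/orP: (kNN_before_queue st_inv s'kNN sx) => [lt|/andP[/eqP eq le_rk]].
  by rewrite (le_lt_trans ds') // (lt_le_trans _ x_le) ?lte_fin.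
have : (d s' v <= d s v)%E by rewrite (le_trans ds') // eq.
rewrite le_eqVlt => /orP[/eqP ->|->] //; rewrite ltxx eqxx /= ltn_neqAle le_rk andbT.
by apply: contraNneq sNS => /rk_inj <-.
Qed.

Lemma unvisited_kNN_not_full s v : s \in NL v -> s \notin S st v ->
  (size (kNN st v) < k)%N.
Proof.
move=> sN sNS; move: (sN); rewrite inE => /andP[_]; apply: leq_ltn_trans.
rewrite -(size_map snd) cardE uniq_leq_size ?(kNN_uniq st_inv) //.
move=> _ /mapP[[x' s'] s'kNN ->]; have [s'L _ _] := kNN_sound st_inv s'kNN.
by rewrite mem_enum inE s'L (kNN_seed_closer sN sNS s'kNN).
Qed.

Lemma pop_le_unvisited dist seed v0 s v : is_pop st dist seed v0 ->
  s \in NL v -> s \notin S st v -> (dist%:E <= d s v)%E.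
Proof.
move=> pop sN sNS; rewrite leNgt; apply/negP => dlt.
have [y [x sx x_le]] := unvisited_queued sN sNS (lt_trans dlt (ltey _)).
have := lexle_le (is_pop_lexle pop sx); rewrite -lee_fin => dist_le.
by have := le_lt_trans dist_le (le_lt_trans x_le dlt); rewrite ltxx.
Qed.

Lemma pop_dist_exact dist seed v0 : is_pop st dist seed v0 ->
  seed \in NL v0 -> dist%:E = d seed v0.
Proof.
move=> pop seedN; have [_ seedNS d_le] := queue_sound st_inv pop.1.
by apply/eqP; rewrite eq_le d_le (pop_le_unvisited pop).
Qed.

Lemma visited_below_pop dist seed v0 s v : is_pop st dist seed v0 ->
  (d s v < dist%:E)%E -> s \in NL v -> s \in S st v.
Proof.
move=> pop dlt sN; apply: contraT => sNS.
by have := le_lt_trans (pop_le_unvisited pop sN sNS) dlt; rewrite ltxx.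
Qed.

End Reached.

Lemma edge_neq u v : e u v -> (v == u) = false.
Proof. by apply: contraTF => /eqP->; rewrite e_irr. Qed.

Lemma decr_or_ins_cases (o : option R) p x :
  decr_or_ins o p = Some x -> o = Some x \/ x = p.
Proof. by case: o => [q|] [<-]; [rewrite minEle; case: ifP; [left|right]|right]. Qed.

Lemma decr_or_ins_le (o : option R) p :
  exists2 x, decr_or_ins o p = Some x & x <= p /\ forall q, o = Some q -> x <= q.
Proof.
case: o => [q|] /=; last by exists p.
by exists (Num.min q p) => //; split=> [|_ [<-]]; rewrite ge_min lexx ?orbT.
Qed.

Section Step.
Variables (st : state) (dist : R) (seed v0 : V).
Hypotheses (st_inv : invariant st) (pop : is_pop st dist seed v0).
Local Notation st' := (after e w k st dist seed v0).

Lemma S_after v : S st' v = if v == v0 then seed |: S st v else S st v.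
Proof. by rewrite /after; case: ifP. Qed.

Lemma S_after_mono v : {subset S st v <= S st' v}.
Proof. by move=> s sS; rewrite S_after; case: ifP; rewrite ?inE ?sS ?orbT. Qed.

Lemma S_after_popped s v : (s == seed) && (v == v0) -> s \in S st' v.
Proof. by case/andP=> /eqP-> /eqP->; rewrite S_after eqxx !inE eqxx. Qed.

Lemma kNN_after v : kNN st' v =
  if (size (kNN st v0) < k)%N && (v == v0) then rcons (kNN st v) (dist, seed)
  else kNN st v.
Proof. by rewrite /after; case: ifP => //=; case: ifP. Qed.

Lemma Q_after s v : Q st' s v =
  if (s == seed) && (v == v0) then None
  else if [&& (size (kNN st v0) < k)%N, s == seed, e v0 v, (size (kNN st v) < k)%N
           & seed \notin S st v]
  then decr_or_ins (Q st s v) (dist + w v0 v) else Q st s v.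
Proof.
rewrite /after; case: ifP => //= _; have [->|nv] := eqVneq v v0.
  by rewrite e_irr !andbF andbT; case: (s == seed).
by rewrite !andbF.
Qed.

Lemma Q_after_cases s v x : Q st' s v = Some x ->
  ~~ ((s == seed) && (v == v0)) /\
  (Q st s v = Some x \/ [/\ s = seed, e v0 v, seed \notin S st v & x = dist + w v0 v]).
Proof.
rewrite Q_after; case: ifP => // _.
case: ifP => [/and5P[_ /eqP-> ev0v _ sNS]|_ sx]; last by split=> //; left.
by case/decr_or_ins_cases=> [sx|->]; split=> //; [left|right].
Qed.

Lemma Q_after_le s v x : Q st s v = Some x -> ~~ ((s == seed) && (v == v0)) ->
  exists2 x', Q st' s v = Some x' & x' <= x.
Proof.
move=> sx nsv; rewrite Q_after (negbTE nsv) sx; case: ifP => _; last by exists x.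
by have [x' -> [_ /(_ x erefl) x'_le]] := decr_or_ins_le (Some x) (dist + w v0 v); exists x'.
Qed.

Lemma Q_after_relax v : (size (kNN st v0) < k)%N -> e v0 v ->
  (size (kNN st v) < k)%N -> seed \notin S st v ->
  exists2 x, Q st' seed v = Some x & x <= dist + w v0 v.
Proof.
move=> kv0 ev0v kv sNS.
rewrite Q_after (edge_neq ev0v) andbF kv0 eqxx ev0v kv sNS /=.
by have [x -> [x_le _]] := decr_or_ins_le (Q st seed v) (dist + w v0 v); exists x.
Qed.

Lemma mem_kNN_after v x s : (x, s) \in kNN st' v ->
  (x, s) \in kNN st v \/ [/\ v = v0, x = dist & s = seed].
Proof.
rewrite kNN_after; case: ifP => [/andP[_ /eqP->]|_]; last by left.
by rewrite mem_rcons inE => /orP[/eqP[-> ->]|]; [right|left].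
Qed.

Lemma queue_sound_after s v x : Q st' s v = Some x ->
  [/\ s \in L, s \notin S st' v & (d s v <= x%:E)%E].
Proof.
have [seedL _ d_le] := queue_sound st_inv pop.1.
case/Q_after_cases=> nsv [/(queue_sound st_inv)[sL sNS dsv]|[-> ev0v sNSv ->]].
  split=> //; rewrite S_after; case: ifP => // vv0.
  by rewrite !inE negb_or sNS andbT; apply: contraNneq nsv => ->; rewrite vv0 eqxx.
split=> //; first by rewrite S_after (edge_neq ev0v).
by rewrite EFinD (le_trans (dG_edge_le w_ge0 _ ev0v)) // leeD2r.
Qed.

Lemma source_pending_after s : s \in L ->
  s \in S st' s \/ exists2 x, Q st' s s = Some x & x <= 0.
Proof.
move=> /(source_pending st_inv)[/S_after_mono|[x sx x_le0]]; first by left.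
have [/S_after_popped|nss] := boolP ((s == seed) && (s == v0)); first by left.
by right; have [x' sx' x'_le] := Q_after_le sx nss; exists x'; rewrite // (le_trans x'_le).
Qed.

Lemma edge_relaxed_after s u v : s \in S st' u -> s \in NL u -> e u v -> s \in NL v ->
  s \in S st' v \/ exists2 x, Q st' s v = Some x & (x%:E <= d s u + (w u v)%:E)%E.
Proof.
move=> sSu' sNu euv sNv.
have [/S_after_popped|nsv] := boolP ((s == seed) && (v == v0)); first by left.
have [sSu|sNSu] := boolP (s \in S st u).
  case: (edge_relaxed st_inv sSu sNu euv sNv) => [/S_after_mono|[x sx x_le]]; first by left.
  have [x' sx' x'_le] := Q_after_le sx nsv.
  by right; exists x'; rewrite // (le_trans _ x_le) ?lee_fin.
move: sSu'; rewrite S_after; case: ifP => [/eqP uv0|]; last by rewrite (negbTE sNSu).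
rewrite !inE (negbTE sNSu) orbF => /eqP sseed; subst s u.
have [seedSv|seedNSv] := boolP (seed \in S st v); first by left; apply: S_after_mono.
have [_ seedNS _] := queue_sound st_inv pop.1.
have [x sx x_le] := Q_after_relax (unvisited_kNN_not_full st_inv sNu seedNS) euv
  (unvisited_kNN_not_full st_inv sNv seedNSv) seedNSv.
by right; exists x; rewrite // -(pop_dist_exact st_inv pop sNu) -EFinD lee_fin.
Qed.

Lemma kNN_uniq_after v : uniq (map snd (kNN st' v)).
Proof.
rewrite kNN_after; case: ifP => [/andP[_ /eqP->]|_]; last exact: (kNN_uniq st_inv).
rewrite map_rcons rcons_uniq (kNN_uniq st_inv) andbT.
have [_ seedNS _] := queue_sound st_inv pop.1.
apply/negP=> /mapP[[x s] /(kNN_sound st_inv)[_ sS _] /= sseed].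
by rewrite sseed sS in seedNS.
Qed.

Lemma kNN_sound_after v x s : (x, s) \in kNN st' v ->
  [/\ s \in L, s \in S st' v & (d s v <= x%:E)%E].
Proof.
case/mem_kNN_after=> [/(kNN_sound st_inv)[sL sS ds]|[-> -> ->]].
  by split=> //; apply: S_after_mono.
have [seedL _ d_le] := queue_sound st_inv pop.1.
by split=> //; apply: S_after_popped; rewrite !eqxx.
Qed.

Lemma kNN_before_queue_after v x (s : V) : (x, s) \in kNN st' v ->
  forall s' v' x', Q st' s' v' = Some x' -> lexle x (rk s) x' (rk s').
Proof.
move=> xs s' v' x' /Q_after_cases[_ [s'x'|[-> ev0v' _ ->]]].
  case/mem_kNN_after: xs => [/(kNN_before_queue st_inv)/(_ _ _ _ s'x') //|[_ -> ->]].
  exact: is_pop_lexle pop s'x'.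
have lex_new := lexle_addr dist (rk seed) (w_ge0 ev0v').
case/mem_kNN_after: xs => [/(kNN_before_queue st_inv)/(_ _ _ _ pop.1) old|[_ -> ->] //].
exact: lexle_trans old lex_new.
Qed.

Lemma invariant_after : invariant st'.
Proof.
exact: Invariant queue_sound_after source_pending_after edge_relaxed_after
  kNN_uniq_after kNN_sound_after kNN_before_queue_after.
Qed.

End Step.

Lemma reach_invariant st : reach e w L k st -> invariant st.
Proof.
elim=> [|st' dist seed v0 _ st_inv pop]; first exact: invariant_init.
exact: invariant_after.
Qed.

End Algorithm.

Theorem lemmaB4 (R : realType) (V : finType) (e : rel V) (w : V -> V -> R)
    (L : {set V}) (k : nat) :
  symmetric e -> irreflexive e ->
  (forall u v, e u v -> w u v = w v u) ->
  (forall u v, e u v -> 0 <= w u v) ->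
  (0 < k)%N ->
  forall st : state R V, reach e w L k st ->
  forall (dist : R) (seed v0 : V), is_pop st dist seed v0 ->
    (seed \in NLV e w L k v0 -> (dist%:E = dG e w seed v0)) /\
    (forall s v, s \in L -> (dG e w s v < dist%:E)%E ->
       s \in NLV e w L k v -> s \in S st v).
Proof.
move=> _ e_irr _ w_ge0 _ st /(reach_invariant e_irr w_ge0) st_inv dist seed v0 pop.
split=> [|s v _]; first exact: (pop_dist_exact w_ge0 st_inv pop).
exact: (visited_below_pop w_ge0 st_inv pop).
Qed.
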